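(* For any $\epsilon>0$ consider, for $r\geqslant 0$, \[ \begin{aligned} \overline u_{\rm in,\epsilon}(r) &=L(r^2+\epsilon)^{-\frac{m}{2}}, \\ \overline v_{\rm in,\epsilon}(r) &=m(n-2-m) L(r^2+\epsilon)^{-\frac{m+2}{2}}, \\ \overline w_{\rm in,\epsilon}(r) &=m(m+2)(n-2-m)(n-4-m) L(r^2+\epsilon)^{-\frac{m+4}{2}}. \end{aligned} \] Then for all $r>0$, \[ -\Delta \overline u_{\rm in,\epsilon} \geqslant \overline v_{\rm in,\epsilon},\qquad -\Delta \overline v_{\rm in,\epsilon} \geqslant \overline w_{\rm in,\epsilon},\qquad -\Delta \overline w_{\rm in,\epsilon} \geqslant \overline u_{\rm in,\epsilon}^p . \]
   Context: Let $n\geqslant 15$ and $p>p_{\mathsf{JL}}(6,n)$, where $p_{\mathsf{JL}}(6,n)=\frac{(n+4)\sqrt{3} - \sqrt{\sqrt[3]{K_0+K_1}+ \sqrt[3]{K_0-K_1} + 3n^2+32 }}{(n-8)\sqrt{3} - \sqrt{\sqrt[3]{K_0+K_1} + \sqrt[3]{K_0-K_1} + 3n^2+32 }}$ with $2K_0 =-27n^6+324 n^5-756n^4-2592 n^3 + 25776 n^2 +5184 n -23744$, $2K_1 = \sqrt{(2K_0)^2 - 4(192n^2+256)^3}$. Let $m=6/(p-1)$ and $L=\big(m(m+2)(m+4)(n-2-m)(n-4-m)(n-6-m)\big)^{1/(p-1)}$. For a function $f$ of $r=|x|$, $\Delta f$ denotes the Laplacian in $\mathbf R^n$ of $x\mapsto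 f(|x|)$, i.e. $f''+\frac{n-1}{r}f'$. *)

From Stdlib Require Import Reals Lra.
From Coquelicot Require Import Coquelicot.
Open Scope R_scope.

Definition cbrt (x : R) : R :=
  if Rle_dec 0 x then Rpower x (1/3) else - Rpower (- x) (1/3).

Definition K0 (n : R) : R :=
  (-27*n^6 + 324*n^5 - 756*n^4 - 2592*n^3 + 25776*n^2 + 5184*n - 23744) / 2.

Definition K1 (n : R) : R :=
  sqrt ((2 * K0 n)^2 - 4 * (192*n^2 + 256)^3) / 2.

Definition pJL6 (n : R) : R :=
  let S := sqrt (cbrt (K0 n + K1 n) + cbrt (K0 n - K1 n) + 3*n^2 + 32) in
  ((n + 4) * sqrt 3 - S) / ((n - 8) * sqrt 3 - S).

Definition mexp (p : R) : R := 6 / (p - 1).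

Definition Lconst (n p : R) : R :=
  let m := mexp p in
  Rpower (m*(m+2)*(m+4)*(n-2-m)*(n-4-m)*(n-6-m)) (1/(p-1)).

Definition u_in (n p eps r : R) : R :=
  Lconst n p * Rpower (r^2 + eps) (- mexp p / 2).
Definition v_in (n p eps r : R) : R :=
  let m := mexp p in m*(n-2-m) * Lconst n p * Rpower (r^2 + eps) (- (m+2) / 2).
Definition w_in (n p eps r : R) : R :=
  let m := mexp p in
  m*(m+2)*(n-2-m)*(n-4-m) * Lconst n p * Rpower (r^2 + eps) (- (m+4) / 2).

Definition radial_lap (n : R) (f : R -> R) (r : R) : R :=
  Derive (Derive f) r + (n - 1) / r * Derive f r.

(* For q = r^2 + eps one computes
     -Δ (q^(-a/2)) = a (n-2-a) q^(-(a+2)/2) + a (a+2) eps q^(-(a+4)/2),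
   and the last term is nonnegative for a >= 0.  Taking a = m, m+2, m+4 gives the three
   inequalities; in the last one u^p is again a power of q because m p = m + 6, and its
   constant L^p = L * L^(p-1) matches because L^(p-1) = m(m+2)(m+4)(n-2-m)(n-4-m)(n-6-m).
   All constants are positive as soon as m < n - 6, and this is what p > p_JL(6,n) gives:
   the Cardano sum of cube roots in p_JL is -s with s the positive root of
   s^3 - 3 Q s + 2 K0 (Q = 192 n^2 + 256), the cubic is negative at 48 n - 160, hence
   s > 48 n - 160, p_JL >= 1 + 12/(n-8) and m < (n-8)/2. *)

From Stdlib Require Import Reals Lra List FunctionalExtensionality.
From Coquelicot Require Import Coquelicot.
Import ListNotations.
Open Scope R_scope.

Definition radial_power (eps K a r : R) : R := K * Rpower (r^2 + eps) (- a / 2).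

Lemma Rpower_plus_1 (q c : R) : 0 < q -> Rpower q (c + 1) = Rpower q c * q.
Proof. intros Hq. rewrite Rpower_plus, Rpower_1 by exact Hq. reflexivity. Qed.

Lemma is_derive_Rpower_shifted_square (eps c r : R) : 0 < eps ->
  is_derive (fun r => Rpower (r^2 + eps) c) r (2 * c * r * Rpower (r^2 + eps) (c - 1)).
Proof.
  intros He. assert (Hq : 0 < r^2 + eps) by nra.
  replace (Rpower (r^2 + eps) (c - 1)) with (Rpower (r^2 + eps) c / (r^2 + eps)).
  - unfold Rpower. auto_derive; [lra|].
    replace (r * (r * 1)) with (r^2) by ring. field. lra.
  - pose proof (Rpower_plus_1 _ (c - 1) Hq) as E.
    replace (c - 1 + 1) with c in E by ring.
    rewrite E. field. lra.
Qed.

Lemma Derive_radial_power (eps K a : R) : 0 < eps ->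
  Derive (radial_power eps K a) = fun r => - (K * a) * (r * Rpower (r^2 + eps) (- a / 2 - 1)).
Proof.
  intros He. apply functional_extensionality. intros r. apply is_derive_unique.
  unfold radial_power.
  replace (- (K * a) * (r * Rpower (r^2 + eps) (- a / 2 - 1)))
    with (K * (2 * (- a / 2) * r * Rpower (r^2 + eps) (- a / 2 - 1))) by field.
  apply (is_derive_scal (fun r => Rpower (r^2 + eps) (- a / 2))).
  apply is_derive_Rpower_shifted_square. exact He.
Qed.

Lemma opp_radial_lap_radial_power (N eps K a r : R) : 0 < eps -> 0 < r ->
  - radial_lap N (radial_power eps K a) r =
  radial_power eps (K * a * (N - 2 - a)) (a + 2) r + radial_power eps (K * a * (a + 2) * eps) (a + 4) r.
Proof.
  intros He Hr. assert (Hq : 0 < r^2 + eps) by nra.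
  assert (Hd : is_derive (fun r => r * Rpower (r^2 + eps) (- a / 2 - 1)) r
     (1 * Rpower (r^2 + eps) (- a / 2 - 1)
      + r * (2 * (- a / 2 - 1) * r * Rpower (r^2 + eps) (- a / 2 - 1 - 1)))).
  { apply (is_derive_mult (fun r => r) (fun r => Rpower (r^2 + eps) (- a / 2 - 1))).
    - exact (@is_derive_id R_AbsRing r).
    - apply is_derive_Rpower_shifted_square. exact He.
    - intros; apply Rmult_comm. }
  unfold radial_lap, radial_power. fold (radial_power eps K a).
  rewrite Derive_radial_power by exact He.
  rewrite Derive_scal, (is_derive_unique (fun x : R => x * Rpower (x^2 + eps) (- a / 2 - 1)) r _ Hd).
  replace (- a / 2 - 1 - 1) with (- (a + 4) / 2) by field.
  replace (- a / 2 - 1) with (- (a + 4) / 2 + 1) by field.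
  replace (- (a + 2) / 2) with (- (a + 4) / 2 + 1) by field.
  rewrite Rpower_plus_1 by exact Hq.
  field. lra.
Qed.

Lemma opp_radial_lap_radial_power_ge (N eps K a r : R) :
  0 < eps -> 0 < r -> 0 <= K -> 0 <= a ->
  - radial_lap N (radial_power eps K a) r >= radial_power eps (K * a * (N - 2 - a)) (a + 2) r.
Proof.
  intros He Hr HK Ha. rewrite opp_radial_lap_radial_power by assumption.
  assert (0 <= radial_power eps (K * a * (a + 2) * eps) (a + 4) r); [|lra].
  unfold radial_power. pose proof (exp_pos (- (a + 4) / 2 * ln (r^2 + eps))).
  unfold Rpower. repeat apply Rmult_le_pos; lra.
Qed.

Lemma Rpower_radial_power (eps K a p r : R) : 0 < eps -> 0 < K ->
  Rpower (radial_power eps K a r) p = radial_power eps (Rpower K p) (a * p) r.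
Proof.
  intros He HK. assert (Hq : 0 < r^2 + eps) by nra.
  unfold radial_power. rewrite <- Rpower_mult_distr by (auto; apply exp_pos).
  rewrite Rpower_mult. do 2 f_equal. field.
Qed.

Lemma Rpower_root_pow (x p : R) : 0 < x -> p <> 1 ->
  Rpower (Rpower x (1 / (p - 1))) p = Rpower x (1 / (p - 1)) * x.
Proof.
  intros Hx Hp. rewrite Rpower_mult, <- Rpower_plus_1 by exact Hx.
  f_equal. field. lra.
Qed.

Lemma mexp_mul (p : R) : p <> 1 -> mexp p * p = mexp p + 6.
Proof. intros Hp. unfold mexp. field. lra. Qed.

Lemma opp_radial_lap_u_in_ge (N p eps r : R) : 0 < eps -> 0 < r -> 0 <= mexp p ->
  - radial_lap N (u_in N p eps) r >= v_in N p eps r.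
Proof.
  intros He Hr Hm. set (m := mexp p) in *. set (L := Lconst N p).
  assert (HL : 0 < L) by apply exp_pos.
  change (u_in N p eps) with (radial_power eps L m).
  change (v_in N p eps r) with (radial_power eps (m * (N - 2 - m) * L) (m + 2) r).
  replace (m * (N - 2 - m) * L) with (L * m * (N - 2 - m)) by ring.
  apply opp_radial_lap_radial_power_ge; lra.
Qed.

Lemma opp_radial_lap_v_in_ge (N p eps r : R) : 0 < eps -> 0 < r -> 0 <= mexp p <= N - 2 ->
  - radial_lap N (v_in N p eps) r >= w_in N p eps r.
Proof.
  intros He Hr Hm. set (m := mexp p) in *. set (L := Lconst N p).
  assert (HL : 0 < L) by apply exp_pos.
  change (v_in N p eps) with (radial_power eps (m * (N - 2 - m) * L) (m + 2)).
  change (w_in N p eps r)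
    with (radial_power eps (m * (m + 2) * (N - 2 - m) * (N - 4 - m) * L) (m + 4) r).
  clearbody m L.
  replace (m * (m + 2) * (N - 2 - m) * (N - 4 - m) * L)
    with (m * (N - 2 - m) * L * (m + 2) * (N - 2 - (m + 2))) by ring.
  replace (m + 4) with (m + 2 + 2) by ring.
  apply opp_radial_lap_radial_power_ge; try lra.
  repeat apply Rmult_le_pos; lra.
Qed.

Lemma opp_radial_lap_w_in_ge (N p eps r : R) : 0 < eps -> 0 < r -> 1 < p -> 0 < mexp p < N - 6 ->
  - radial_lap N (w_in N p eps) r >= Rpower (u_in N p eps r) p.
Proof.
  intros He Hr Hp Hm. pose proof (mexp_mul p) as Hmp.
  set (m := mexp p) in *. set (L := Lconst N p).
  set (P := m * (m + 2) * (m + 4) * (N - 2 - m) * (N - 4 - m) * (N - 6 - m)).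
  assert (HL : 0 < L) by apply exp_pos.
  assert (HP : 0 < P) by (unfold P; clearbody m; repeat apply Rmult_lt_0_compat; lra).
  assert (HLp : Rpower L p = L * P) by (apply Rpower_root_pow; lra).
  change (u_in N p eps r) with (radial_power eps L m r).
  change (w_in N p eps)
    with (radial_power eps (m * (m + 2) * (N - 2 - m) * (N - 4 - m) * L) (m + 4)).
  rewrite Rpower_radial_power, HLp, Hmp by lra.
  clearbody m L. unfold P.
  replace (L * (m * (m + 2) * (m + 4) * (N - 2 - m) * (N - 4 - m) * (N - 6 - m)))
    with (m * (m + 2) * (N - 2 - m) * (N - 4 - m) * L * (m + 4) * (N - 2 - (m + 4))) by ring.
  replace (m + 6) with (m + 4 + 2) by ring.
  apply opp_radial_lap_radial_power_ge; try lra.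
  repeat apply Rmult_le_pos; lra.
Qed.

(* Each polynomial inequality below, valid for N >= 15, is proved by expanding in N - 15:
   all coefficients of the expansion are positive. *)
Fixpoint horner (cs : list R) (x : R) : R :=
  match cs with
  | [] => 0
  | c :: cs => c + x * horner cs x
  end.

Lemma horner_nonneg (cs : list R) (x : R) : 0 <= x -> List.Forall (Rle 0) cs -> 0 <= horner cs x.
Proof.
  intros Hx Hcs. induction Hcs as [|c cs Hc _ IH]; simpl; [lra|].
  pose proof (Rmult_le_pos _ _ Hx IH). lra.
Qed.

Lemma horner_pos (c : R) (cs : list R) (x : R) :
  0 <= x -> 0 < c -> List.Forall (Rle 0) cs -> 0 < horner (c :: cs) x.
Proof.
  intros Hx Hc Hcs. simpl. pose proof (Rmult_le_pos _ _ Hx (horner_nonneg cs x Hx Hcs)). lra.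
Qed.

Ltac prove_horner_pos :=
  apply horner_pos; [lra | lra | repeat (apply List.Forall_cons; [lra|]); apply List.Forall_nil].

Lemma K0_neg (N : R) : 15 <= N -> K0 N < 0.
Proof.
  intros HN.
  assert (E : K0 N = - horner [102676259/2; 26091693; 10679589/2; 570726; 67581/2; 1053; 27/2] (N - 15))
    by (unfold K0; simpl; field).
  assert (0 < horner [102676259/2; 26091693; 10679589/2; 570726; 67581/2; 1053; 27/2] (N - 15))
    by prove_horner_pos.
  lra.
Qed.

Lemma K0_sq_gt_cube (N : R) : 15 <= N -> (192 * N^2 + 256)^3 < K0 N ^ 2.
Proof.
  intros HN.
  assert (E : K0 N ^ 2 - (192 * N^2 + 256)^3 =
    horner [10214160759983817/4; 2646365462602407; 2447267074302177/2; 336769112015091;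
            246965545626615/4; 7965902907054; 742924976247; 50520316734; 9951685191/4;
            86572395; 4042305/2; 28431; 729/4] (N - 15))
    by (unfold K0; simpl; field).
  assert (0 < horner [10214160759983817/4; 2646365462602407; 2447267074302177/2; 336769112015091;
            246965545626615/4; 7965902907054; 742924976247; 50520316734; 9951685191/4;
            86572395; 4042305/2; 28431; 729/4] (N - 15))
    by prove_horner_pos.
  lra.
Qed.

Lemma cardano_cubic_neg_at_48N_sub_160 (N : R) : 15 <= N ->
  (48 * N - 160)^3 - 3 * (192 * N^2 + 256) * (48 * N - 160) + 2 * K0 N < 0.
Proof.
  intros HN.
  assert (E : (48 * N - 160)^3 - 3 * (192 * N^2 + 256) * (48 * N - 160) + 2 * K0 N =
    - horner [66339; 22959450; 7960869; 1058508; 67581; 2106; 27] (N - 15))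
    by (unfold K0; simpl; field).
  assert (0 < horner [66339; 22959450; 7960869; 1058508; 67581; 2106; 27] (N - 15))
    by prove_horner_pos.
  lra.
Qed.

Lemma cbrt_neg (x : R) : x < 0 -> cbrt x = - Rpower (- x) (1 / 3).
Proof. intros Hx. unfold cbrt. destruct (Rle_dec 0 x); [lra | reflexivity]. Qed.

Lemma Rpower_third_cube (y : R) : 0 < y -> Rpower y (1 / 3) ^ 3 = y.
Proof.
  intros Hy. rewrite <- Rpower_pow by apply exp_pos.
  rewrite Rpower_mult. replace (1 / 3 * INR 3) with 1 by (simpl; field).
  apply Rpower_1. exact Hy.
Qed.

Lemma Rpower_cube_third (y : R) : 0 < y -> Rpower (y ^ 3) (1 / 3) = y.
Proof.
  intros Hy. rewrite <- Rpower_pow by exact Hy.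
  rewrite Rpower_mult. replace (INR 3 * (1 / 3)) with 1 by (simpl; field).
  apply Rpower_1. exact Hy.
Qed.

Lemma cardano_sum (Q k0 k1 : R) : 0 < Q -> k0 < 0 -> 0 <= k1 -> k1 ^ 2 = k0 ^ 2 - Q ^ 3 ->
  exists s, cbrt (k0 + k1) + cbrt (k0 - k1) = - s /\
            0 < s /\ s ^ 3 - 3 * Q * s + 2 * k0 = 0 /\ 4 * Q <= s ^ 2.
Proof.
  intros HQ Hk0 Hk1 Hk.
  assert (HQ3 : 0 < Q ^ 3) by (apply pow_lt; exact HQ).
  assert (Hlt : k1 < - k0) by nra.
  rewrite !cbrt_neg by lra.
  set (a := Rpower (- (k0 + k1)) (1 / 3)). set (b := Rpower (- (k0 - k1)) (1 / 3)).
  assert (Ha : 0 < a) by apply exp_pos. assert (Hb : 0 < b) by apply exp_pos.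
  assert (Ha3 : a ^ 3 = - (k0 + k1)) by (apply Rpower_third_cube; lra).
  assert (Hb3 : b ^ 3 = - (k0 - k1)) by (apply Rpower_third_cube; lra).
  assert (Hab : a * b = Q).
  { unfold a, b. rewrite Rpower_mult_distr by lra.
    replace (- (k0 + k1) * - (k0 - k1)) with (Q ^ 3) by nra.
    apply Rpower_cube_third. exact HQ. }
  exists (a + b). repeat split.
  - ring.
  - lra.
  - replace ((a + b) ^ 3) with (a ^ 3 + b ^ 3 + 3 * (a * b) * (a + b)) by ring.
    rewrite Ha3, Hb3, Hab. ring.
  - rewrite <- Hab. pose proof (pow2_ge_0 (a - b)). nra.
Qed.

(* The difference of the cubic at M and at s is (M - s) (M^2 + M s + s^2 - 3 Q). *)
Lemma cubic_root_gt (Q c s M : R) : 0 < s -> 3 * Q < s ^ 2 ->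
  s ^ 3 - 3 * Q * s + c = 0 -> M ^ 3 - 3 * Q * M + c < 0 -> M < s.
Proof.
  intros Hs HQs Hroot HM. destruct (Rlt_or_le M s) as [|Hle]; [assumption|].
  assert (0 <= (M - s) * (M ^ 2 + M * s + s ^ 2 - 3 * Q)).
  { apply Rmult_le_pos; [lra|]. assert (0 <= M * s) by nra. nra. }
  nra.
Qed.

Lemma K1_sq (N : R) : (192 * N^2 + 256)^3 <= K0 N ^ 2 -> K1 N ^ 2 = K0 N ^ 2 - (192 * N^2 + 256)^3.
Proof.
  intros Hd. unfold K1.
  set (X := (2 * K0 N)^2 - 4 * (192 * N^2 + 256)^3).
  replace ((sqrt X / 2) ^ 2) with (sqrt X ^ 2 / 4) by field.
  rewrite pow2_sqrt by (unfold X; lra). unfold X. field.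
Qed.

Lemma cbrt_sum_lt (N : R) : 15 <= N -> cbrt (K0 N + K1 N) + cbrt (K0 N - K1 N) < 160 - 48 * N.
Proof.
  intros HN. set (Q := 192 * N^2 + 256).
  assert (HQ : 0 < Q) by (unfold Q; nra).
  pose proof (K0_sq_gt_cube N HN) as Hd. fold Q in Hd.
  assert (HK1 : 0 <= K1 N) by (unfold K1; apply Rmult_le_pos; [apply sqrt_pos | lra]).
  destruct (cardano_sum Q (K0 N) (K1 N)) as (s & Hs & Hs0 & Hroot & Hs2).
  - exact HQ.
  - apply K0_neg. exact HN.
  - exact HK1.
  - apply K1_sq. fold Q. lra.
  - assert (48 * N - 160 < s); [|lra].
    apply (cubic_root_gt Q (2 * K0 N)); try lra.
    apply cardano_cubic_neg_at_48N_sub_160. exact HN.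
Qed.

Lemma sqrt_lt_mult_sqrt (D c k : R) : 0 < c -> 0 < k -> D < c ^ 2 * k -> sqrt D < c * sqrt k.
Proof.
  intros Hc Hk HD. destruct (Rle_or_lt D 0) as [HD0|HD0].
  - rewrite sqrt_neg_0 by exact HD0. apply Rmult_lt_0_compat; [exact Hc | apply sqrt_lt_R0; exact Hk].
  - rewrite <- (sqrt_pow2 c), <- sqrt_mult_alt by (try apply pow_le; lra).
    apply sqrt_lt_1_alt. lra.
Qed.

Lemma pJL6_ge (N : R) : 15 <= N -> 1 + 12 / (N - 8) <= pJL6 N.
Proof.
  intros HN. unfold pJL6. cbv zeta.
  pose proof (cbrt_sum_lt N HN) as Hc.
  set (S := sqrt (cbrt (K0 N + K1 N) + cbrt (K0 N - K1 N) + 3 * N ^ 2 + 32)).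
  assert (HS : S < (N - 8) * sqrt 3) by (apply sqrt_lt_mult_sqrt; nra).
  assert (HS0 : 0 <= S) by apply sqrt_pos.
  assert (H3 : 0 < sqrt 3) by (apply sqrt_lt_R0; lra).
  replace (((N + 4) * sqrt 3 - S) / ((N - 8) * sqrt 3 - S))
    with (1 + 12 * sqrt 3 / ((N - 8) * sqrt 3 - S)) by (field; lra).
  replace (12 / (N - 8)) with (12 * sqrt 3 / ((N - 8) * sqrt 3)) by (field; lra).
  apply Rplus_le_compat_l, Rmult_le_compat_l; [lra|].
  apply Rinv_le_contravar; lra.
Qed.

Lemma mexp_bounds (N p : R) : 8 < N -> 1 + 12 / (N - 8) < p -> 1 < p /\ 0 < mexp p < N - 6.
Proof.
  intros HN Hp.
  assert (H12 : 0 < 12 / (N - 8)) by (apply Rdiv_lt_0_compat; lra).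
  assert (Hp8 : 12 < (p - 1) * (N - 8)).
  { replace 12 with (12 / (N - 8) * (N - 8)) at 1 by (field; lra).
    apply Rmult_lt_compat_r; lra. }
  unfold mexp. repeat split.
  - lra.
  - apply Rdiv_lt_0_compat; lra.
  - apply (Rmult_lt_reg_r (p - 1)); [lra|].
    replace (6 / (p - 1) * (p - 1)) with 6 by (field; lra). nra.
Qed.

Theorem lemma3p3 (n : nat) (p eps : R) :
  (15 <= n)%nat -> pJL6 (INR n) < p -> 0 < eps ->
  forall r : R, 0 < r ->
    - radial_lap (INR n) (u_in (INR n) p eps) r >= v_in (INR n) p eps r /\
    - radial_lap (INR n) (v_in (INR n) p eps) r >= w_in (INR n) p eps r /\
    - radial_lap (INR n) (w_in (INR n) p eps) r >= Rpower (u_in (INR n) p eps r) p.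
Proof.
  intros Hn Hp He r Hr.
  assert (HN : 15 <= INR n) by (apply le_INR in Hn; simpl in Hn; lra).
  pose proof (pJL6_ge (INR n) HN) as Hge.
  destruct (mexp_bounds (INR n) p) as (Hp1 & Hm); [lra | lra |].
  split; [|split].
  - apply opp_radial_lap_u_in_ge; lra.
  - apply opp_radial_lap_v_in_ge; lra.
  - apply opp_radial_lap_w_in_ge; lra.
Qed.
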